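(* Let $S$ be a finite set, $f:S\to\mathbb{R}$ a fitness function to be maximized, $S_{\mathrm{opt}}$ the set of maximizers of $f$ and $S_{\mathrm{non}}=S\setminus S_{\mathrm{opt}}$ (assumed nonempty). Let $s1,\dots,s\kappa$ be $\kappa$ mutation operators on $S$, and let $\mathbf{q}$ be any strategy probability distribution over them. Then the homogeneous mixed strategy (1+1) EA with strategy distribution $\mathbf{q}$ satisfies $$R(\mathbf{T}_{\mathbf{q}})\ \ge\ \min\{R(\mathbf{T}_{sk});\ k=1,\dots,\kappa\}\quad\text{and}\quad T(\mathbf{T}_{\mathbf{q}})\ \le\ \max\{T(\mathbf{T}_{sk});\ k=1,\dots,\kappa\},$$ i.e. its asymptotic convergence rate is not smaller, and its asymptotic hitting time not larger, than that of the worst pure strategy (1+1) EA using only one of these mutation operators.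
   Context: A mutation operator $s$ on the finite set $S$ is a stochastic matrix $\mathbf{P}_{m,s}=[P_{m,s}(x,y)]_{x,y\in S}$ (probability that mutating $x$ yields $y$). Strict elitist selection between parent $x$ and offspring $y$ keeps $y$ if $f(y)>f(x)$ and keeps $x$ otherwise. The pure strategy (1+1) EA EA($s$) repeatedly mutates the current individual by $s$ and applies strict elitist selection; it is a homogeneous Markov chain on $S$ with transition probabilities $P_s(x,y)=P_{m,s}(x,y)$ if $f(y)>f(x)$, $P_s(x,y)=0$ if $y\neq x$ and $f(y)\le f(x)$, and $P_s(x,x)=1-\sum_{y:\,f(y)>f(x)}P_{m,s}(x,y)$. A (state-dependent) strategy probability distribution is a map $x\mapsto \mathbf{q}(x)=(q_{s1}(x),\dots,q_{s\kappa}(x))$ with $q_{sk}(x)\in[0,1]$ and $\sum_k q_{sk}(x)=1$. The homogeneous mixed strategy (1+1) EA with distribution $\mathbf{q}$ at each generation, with current individual $x$, chooses operator $sk$ with probability $q_{sk}(x)$, mutates $x$ by it, and applies strict elitist selection; its transition matrix is $P_{\mathbf{q}}(x,y)=\sum_{k}q_{sk}(x)P_{sk}(x,y)$. For such an EA with transition matrix $\mathbf{P}$, let $\mathbf{T}$ denote the submatrix $[P(x,y)]_{x,y\in S_{\mathrm{non}}}$ and $\rho(\mathbf{T})$ its spectral radius. The asymptotic convergence rate is $R(\mathbf{T})=-\ln\rho(\mathbf{T})$ (with $-\ln 0=+\infty$). The asymptotic hitting time is $T(\mathbf{T})=\rho((\mathbf{I}-\mathbf{T})^{-1})$ if $\rho(\mathbf{T})<1$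 and $T(\mathbf{T})=+\infty$ if $\rho(\mathbf{T})=1$. Subscripts $\mathbf{q}$ and $sk$ indicate the matrices of the mixed strategy EA and of the pure strategy EA($sk$), respectively. *)

From HB Require Import structures.
From mathcomp Require Import all_boot all_order all_algebra.
From mathcomp Require Import complex.
From mathcomp Require Import all_classical all_reals all_analysis.
Set Implicit Arguments. Unset Strict Implicit. Unset Printing Implicit Defensive.
Import Order.TTheory GRing.Theory Num.Theory.
Local Open Scope ring_scope.
Local Open Scope classical_set_scope.

Section EA.
Variable R : realType.

Definition spec_rad (n : nat) (A : 'M[R]_n) : R :=
  sup [set Normc.normc z | z in
         [set z : R[i] | eigenvalue (map_mx (real_complex R) A) z]].

Variable S : finType.

(* a mutation operator: a stochastic matrix indexed by S *)
Definition stochastic (P : S -> S -> R) : Prop :=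
  (forall x y, 0 <= P x y) /\ (forall x, \sum_(y : S) P x y = 1).

Variable f : S -> R.

Definition Snon : {set S} := [set x | [exists y, f x < f y]].

(* transition matrix of the pure strategy EA(s) with strict elitist selection *)
Definition pure_trans (Pm : S -> S -> R) (x y : S) : R :=
  if f x < f y then Pm x y
  else if y == x then 1 - \sum_(z | f x < f z) Pm x z
  else 0.

Definition strategy_distr (kappa : nat) (q : S -> 'I_kappa -> R) : Prop :=
  (forall x k, 0 <= q x k <= 1) /\ (forall x, \sum_(k < kappa) q x k = 1).

Definition mixed_trans (kappa : nat) (q : S -> 'I_kappa -> R)
    (Pm : 'I_kappa -> S -> S -> R) (x y : S) : R :=
  \sum_(k < kappa) q x k * pure_trans (Pm k) x y.

Definition Tsub (P : S -> S -> R) : 'M[R]_#|Snon| :=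
  \matrix_(i, j) P (enum_val i) (enum_val j).

Definition conv_rate (n : nat) (T : 'M[R]_n) : \bar R :=
  if spec_rad T == 0 then +oo%E else (- ln (spec_rad T))%:E.

(* asymptotic hitting time T(T) = rho((I-T)^-1) if rho(T) < 1, +oo otherwise
   (for these substochastic T one always has rho(T) <= 1) *)
Definition hit_time (n : nat) (T : 'M[R]_n) : \bar R :=
  if spec_rad T < 1 then (spec_rad (invmx (1%:M - T)))%:E else +oo%E.

End EA.

(* On S_non every transition matrix of an elitist (1+1) EA is triangular once the
   states are ordered by fitness: an off-diagonal move is possible only towards a
   strictly fitter state.  Its eigenvalues are therefore its diagonal entries, so
   rho(T) is the largest probability of staying put, and rho((I - T)^-1) is
   (1 - rho(T))^-1.  The staying probability of the mixed strategy is a convex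
   combination of those of the pure strategies, hence rho(T_q) <= rho(T_k) for
   some k, and both R and T are monotone functions of rho. *)

From mathcomp Require Import all_boot all_order all_algebra.
From mathcomp Require Import complex fingroup perm.
From mathcomp Require Import all_classical all_reals all_analysis.
Import Order.TTheory GRing.Theory Num.Theory.
Local Open Scope ring_scope.
Local Open Scope classical_set_scope.
Set Implicit Arguments. Unset Strict Implicit.

Definition triangular_wrt (F : pzRingType) (K : realDomainType) n
    (g : 'I_n -> K) (A : 'M[F]_n) :=
  forall i j, i != j -> ~~ (g i < g j) -> A i j = 0.

Lemma triangular_wrt_map (F F' : pzRingType) (K : realDomainType) n
    (g : 'I_n -> K) (A : 'M[F]_n) (h : F -> F') :
  h 0 = 0 -> triangular_wrt g A -> triangular_wrt g (map_mx h A).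
Proof. by move=> h0 tA i j ij gij; rewrite mxE tA. Qed.

(* Only the identity permutation contributes: a permutation moving some index
   along nonzero entries would strictly increase [\sum_i g i]. *)
Lemma det_triangular_wrt (F : comNzRingType) (K : realDomainType) n
    (g : 'I_n -> K) (A : 'M[F]_n) :
  triangular_wrt g A -> \det A = \prod_i A i i.
Proof.
move=> tA; rewrite /determinant (bigD1 (1%g : 'S_n)) //=.
rewrite [X in _ + X]big1 => [|s s1].
  by rewrite odd_perm1 expr0 mul1r addr0; apply: eq_bigr => i _; rewrite perm1.
have [[i /eqP Ai0]|nz] := altP (@existsP _ (fun i => A i (s i) == 0)).
  by rewrite (bigD1 i) //= Ai0 mul0r mulr0.
have g_s i : g i <= g (s i) /\ (s i != i -> g i < g (s i)).
  have : A i (s i) != 0 by apply: contra nz => Ai0; apply/existsP; exists i.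
  have [->|si_i] := eqVneq (s i) i; first by rewrite lexx.
  move=> Anz; have gi : g i < g (s i).
    by apply: contraTT Anz => ngi; rewrite negbK tA // eq_sym.
  by rewrite ltW.
have [i si_i] : exists i, s i != i.
  apply/existsP; apply: contraR s1 => /existsPn fix_s.
  by apply/eqP/permP => i; rewrite perm1; move: (fix_s i); rewrite negbK => /eqP.
have : \sum_j g j < \sum_j g (s j).
  rewrite (bigD1 i) //= [X in _ < X](bigD1 i) //=.
  by apply: ltr_leD; [exact: (g_s i).2 | apply: ler_sum => j _; exact: (g_s j).1].
suff -> : \sum_j g (s j) = \sum_j g j by rewrite ltxx.
by symmetry; apply: (reindex_inj (@perm_inj _ s)).
Qed.

Lemma eigenvalue_triangular_wrt (F : fieldType) (K : realDomainType) n
    (g : 'I_n -> K) (A : 'M[F]_n) a :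
  triangular_wrt g A -> eigenvalue A a = [exists i, A i i == a].
Proof.
move=> tA; rewrite /eigenvalue /eigenspace kermx_eq0 row_free_unit unitmxE.
rewrite unitfE (@det_triangular_wrt _ _ _ g) => [|i j ij gij]; last first.
  by rewrite !mxE (negbTE ij) mulr0n subr0 tA.
rewrite negbK prodf_seq_eq0; apply/hasP/existsP => [[i _]|[i Aii]].
  by rewrite !mxE eqxx mulr1n subr_eq0 => Aii; exists i.
by exists i; rewrite ?mem_index_enum // !mxE eqxx mulr1n subr_eq0.
Qed.

Lemma eigenvalue_invmx (F : fieldType) n (A : 'M[F]_n) a :
  A \in unitmx -> eigenvalue (invmx A) a = (a != 0) && eigenvalue A a^-1.
Proof.
move=> uA; apply/eigenvalueP/andP => [[v Av v0]|[a0 /eigenvalueP [v Av v0]]].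
  have v_eq : v = a *: (v *m A) by rewrite scalemxAl -Av mulmxKV.
  have a0 : a != 0 by apply: contra v0 => /eqP a0; rewrite v_eq a0 scale0r.
  split=> //; apply/eigenvalueP; exists v => //.
  by rewrite {2}v_eq scalerA mulVf // scale1r.
exists v => //; have : v *m A *m invmx A = v by rewrite mulmxK.
by rewrite Av -scalemxAl => v_eq; rewrite -{2}v_eq scalerA divff // scale1r.
Qed.

Section SpectralRadius.
Variable R : realType.

Lemma normc_real_complex (x : R) : 0 <= x -> Normc.normc (real_complex R x) = x.
Proof. by move=> x0; rewrite /= expr0n /= addr0 sqrtr_sqr ger0_norm. Qed.

Lemma spec_rad_eq_max n (T : 'M[R]_n) (h : 'I_n -> R) (i0 : 'I_n) :
  (forall i, 0 <= h i) ->
  (forall z, eigenvalue (map_mx (real_complex R) T) z <->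
             exists i, z = real_complex R (h i)) ->
  exists2 i, spec_rad T = h i & forall j, h j <= h i.
Proof.
move=> h0 eigT; pose im := [arg max_(i > i0) h i]%O.
have h_im j : h j <= h im by rewrite /im; case: arg_maxP => // i _; apply.
have spectrum x : [set Normc.normc z | z in
    [set z : R[i] | eigenvalue (map_mx (real_complex R) T) z]] x <->
    exists i, x = h i.
  split=> [[z /eigT [i ->] <-]|[i ->]].
    by exists i; rewrite normc_real_complex.
  exists (real_complex R (h i)); last by rewrite normc_real_complex.
  by apply/eigT; exists i.
exists im => //; apply: le_anti; apply/andP; split.
  apply: ge_sup; first by exists (h im); apply/spectrum; exists im.
  by move=> x /spectrum [i ->].
apply: ub_le_sup; last by apply/spectrum; exists im.
by exists (h im) => x /spectrum [i ->].
Qed.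

Definition hit_time_of_rad (r : R) : \bar R :=
  if r < 1 then ((1 - r)^-1)%:E else +oo%E.

Lemma hit_time_of_rad_le (r s : R) :
  r <= s -> (hit_time_of_rad r <= hit_time_of_rad s)%E.
Proof.
rewrite /hit_time_of_rad => rs; case s1 : (s < 1); last by rewrite leey.
have r1 : r < 1 by apply: le_lt_trans s1.
by rewrite r1 lee_fin lef_pV2 ?posrE ?subr_gt0 // lerD2l lerN2.
Qed.

Variables (n : nat) (g : 'I_n -> R) (i0 : 'I_n) (T : 'M[R]_n).
Hypotheses (tT : triangular_wrt g T) (T_ge0 : forall i, 0 <= T i i).

Lemma spec_rad_triangular :
  exists2 i, spec_rad T = T i i & forall j, T j j <= T i i.
Proof.
apply: (spec_rad_eq_max i0) => // z.
rewrite (eigenvalue_triangular_wrt _ (triangular_wrt_map (rmorph0 _) tT)).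
split=> [/existsP [i /eqP <-]|[i ->]]; first by exists i; rewrite mxE.
by apply/existsP; exists i; rewrite mxE.
Qed.

Lemma spec_rad_triangular_ge0 : 0 <= spec_rad T.
Proof. by have [i -> _] := spec_rad_triangular. Qed.

Lemma spec_rad_triangular_ge i : T i i <= spec_rad T.
Proof. by have [j -> ] := spec_rad_triangular; apply. Qed.

Lemma spec_rad_inv_triangular :
  spec_rad T < 1 -> spec_rad (invmx (1%:M - T)) = (1 - spec_rad T)^-1.
Proof.
move=> rT1; have T_lt1 i : T i i < 1.
  by apply: le_lt_trans rT1; exact: spec_rad_triangular_ge.
set B := map_mx (real_complex R) (1%:M - T).
have tB : triangular_wrt g B.
  by move=> i j ij gij; rewrite !mxE (negbTE ij) tT // subr0 rmorph0.
have B_ii i : B i i = 1 - real_complex R (T i i).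
  by rewrite !mxE eqxx rmorphB rmorph1.
have B_ii_neq0 i : B i i != 0.
  rewrite B_ii -(rmorph1 (real_complex R)) -rmorphB fmorph_eq0 subr_eq0.
  by rewrite eq_sym lt_eqF.
have uB : B \in unitmx.
  by rewrite unitmxE (det_triangular_wrt tB) unitfE; apply/prodf_neq0 => i _.
have [i1 -> h_i1] : exists2 i, spec_rad (invmx (1%:M - T)) = (1 - T i i)^-1 &
    forall j, (1 - T j j)^-1 <= (1 - T i i)^-1.
  apply: (spec_rad_eq_max i0) => [i|z]; first by rewrite invr_ge0 subr_ge0 ltW.
  rewrite map_invmx eigenvalue_invmx // (eigenvalue_triangular_wrt _ tB).
  split=> [/andP [z0 /existsP [i /eqP Bi]]|[i ->]].
    by exists i; rewrite fmorphV rmorphB rmorph1 -B_ii Bi invrK.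
  rewrite fmorphV rmorphB rmorph1 -B_ii invr_eq0 B_ii_neq0.
  by apply/existsP; exists i; rewrite invrK.
have [i -> T_max] := spec_rad_triangular; apply: le_anti; rewrite h_i1 andbT.
by rewrite lef_pV2 ?posrE ?subr_gt0 // lerD2l lerN2 T_max.
Qed.

Lemma hit_time_triangular : hit_time T = hit_time_of_rad (spec_rad T).
Proof.
by rewrite /hit_time /hit_time_of_rad; case: ifPn => // /spec_rad_inv_triangular ->.
Qed.

End SpectralRadius.

Lemma conv_rate_le (R : realType) n m (A : 'M[R]_n) (B : 'M[R]_m) :
  0 <= spec_rad B -> spec_rad B <= spec_rad A -> (conv_rate A <= conv_rate B)%E.
Proof.
rewrite /conv_rate => rB0 rBA; have [|rB_neq0] := eqVneq (spec_rad B) 0.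
  by case: (spec_rad A == 0); rewrite leey.
have rB_gt0 : 0 < spec_rad B by rewrite lt_def rB_neq0.
have rA_gt0 : 0 < spec_rad A by apply: lt_le_trans rBA.
by rewrite (gt_eqF rA_gt0) lee_fin lerN2 ler_ln ?posrE.
Qed.

Lemma hit_time_le_triangular (R : realType) n (g h : 'I_n -> R) (i0 : 'I_n)
    (A B : 'M[R]_n) :
  triangular_wrt g A -> (forall i, 0 <= A i i) ->
  triangular_wrt h B -> (forall i, 0 <= B i i) ->
  spec_rad B <= spec_rad A -> (hit_time B <= hit_time A)%E.
Proof.
move=> tA A0 tB B0 rBA; rewrite (hit_time_triangular i0 tA A0).
by rewrite [hit_time B](hit_time_triangular i0 tB B0) hit_time_of_rad_le.
Qed.

Lemma convex_comb_le_max (R : realDomainType) kappa (w a : 'I_kappa -> R) :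
  (forall k, 0 <= w k) -> \sum_k w k = 1 -> exists k, \sum_k w k * a k <= a k.
Proof.
case: kappa w a => [|kappa] w a w0 w1.
  by move/eqP: w1; rewrite big_ord0 eq_sym oner_eq0.
pose km := [arg max_(k > ord0) a k]%O; exists km.
rewrite -[leRHS]mul1r -w1 mulr_suml; apply: ler_sum => k _; apply: ler_wpM2l => //.
by rewrite /km; case: arg_maxP => // j _; apply.
Qed.

Section MixedStrategy.
Variables (R : realType) (S : finType) (f : S -> R).

Definition elitist (P : S -> S -> R) :=
  forall x y, x != y -> ~~ (f x < f y) -> P x y = 0.

Lemma elitist_pure_trans Pm : elitist (pure_trans f Pm).
Proof.
by move=> x y xy fxy; rewrite /pure_trans (negbTE fxy) eq_sym (negbTE xy).
Qed.

Lemma elitist_mixed_trans kappa (q : S -> 'I_kappa -> R) Pm :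
  elitist (mixed_trans f q Pm).
Proof.
move=> x y xy fxy; rewrite /mixed_trans big1 // => k _.
by rewrite elitist_pure_trans ?mulr0.
Qed.

Lemma triangular_Tsub P : elitist P -> triangular_wrt (f \o enum_val) (Tsub f P).
Proof. by move=> eP i j ij gij; rewrite mxE eP // (inj_eq enum_val_inj). Qed.

Lemma pure_trans_diag_ge0 Pm x : stochastic Pm -> 0 <= pure_trans f Pm x x.
Proof.
case=> Pm0 Pm1; rewrite /pure_trans ltxx eqxx subr_ge0 -(Pm1 x).
by rewrite [leRHS](bigID (fun z => f x < f z)) /= lerDl sumr_ge0.
Qed.

Variables (kappa : nat) (Pm : 'I_kappa -> S -> S -> R) (q : S -> 'I_kappa -> R).
Hypotheses (Pm_stoch : forall k, stochastic (Pm k)) (q_distr : strategy_distr q).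

Lemma mixed_trans_diag_ge0 x : 0 <= mixed_trans f q Pm x x.
Proof.
apply: sumr_ge0 => k _; apply: mulr_ge0; last exact: pure_trans_diag_ge0.
by case/andP: (q_distr.1 x k).
Qed.

Lemma mixed_trans_diag_le x :
  exists k, mixed_trans f q Pm x x <= pure_trans f (Pm k) x x.
Proof.
by apply: convex_comb_le_max (q_distr.2 x) => k; case/andP: (q_distr.1 x k).
Qed.

Lemma Tsub_mixed_diag_ge0 i : 0 <= Tsub f (mixed_trans f q Pm) i i.
Proof. by rewrite mxE mixed_trans_diag_ge0. Qed.

Lemma Tsub_pure_diag_ge0 k i : 0 <= Tsub f (pure_trans f (Pm k)) i i.
Proof. by rewrite mxE pure_trans_diag_ge0. Qed.

Lemma spec_rad_mixed_le (i0 : 'I_#|Snon f|) :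
  exists k, spec_rad (Tsub f (mixed_trans f q Pm))
            <= spec_rad (Tsub f (pure_trans f (Pm k))).
Proof.
have [iq -> _] := spec_rad_triangular i0
  (triangular_Tsub (elitist_mixed_trans q Pm)) Tsub_mixed_diag_ge0.
have [k le_k] := mixed_trans_diag_le (enum_val iq); exists k.
rewrite mxE; apply: le_trans le_k _.
have := spec_rad_triangular_ge i0 (triangular_Tsub (elitist_pure_trans (Pm k)))
  (Tsub_pure_diag_ge0 k) iq.
by rewrite mxE.
Qed.

End MixedStrategy.

Theorem theorem2 (R : realType) (S : finType) (f : S -> R) (kappa : nat)
    (Pm : 'I_kappa -> S -> S -> R) (q : S -> 'I_kappa -> R) :
  Snon f != finset.set0 ->
  (forall k, stochastic (Pm k)) ->
  strategy_distr q ->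
  ((\big[Order.min/+oo%E]_(k < kappa) conv_rate (Tsub f (pure_trans f (Pm k))))
     <= conv_rate (Tsub f (mixed_trans f q Pm)))%E /\
  (hit_time (Tsub f (mixed_trans f q Pm))
     <= \big[Order.max/-oo%E]_(k < kappa) hit_time (Tsub f (pure_trans f (Pm k))))%E.
Proof.
case/finset.set0Pn=> x0 x0_non Pm_stoch q_distr; pose i0 := enum_rank_in x0_non x0.
have [k rqk] := spec_rad_mixed_le Pm_stoch q_distr i0.
have tq := triangular_Tsub (elitist_mixed_trans (f := f) q Pm).
have tk := triangular_Tsub (elitist_pure_trans (f := f) (Pm k)).
have q0 := Tsub_mixed_diag_ge0 (f := f) Pm_stoch q_distr.
have k0 := Tsub_pure_diag_ge0 (f := f) Pm_stoch k.
split.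
- apply: le_trans _ (conv_rate_le (spec_rad_triangular_ge0 i0 tq q0) rqk).
  by rewrite (bigD1 k) //= ge_min lexx.
- apply: le_trans (hit_time_le_triangular i0 tk k0 tq q0 rqk) _.
  by rewrite (bigD1 k) //= le_max lexx.
Qed.
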